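(* For every integer $n\ge1$, $$D(n):=\sum_{\substack{1\le d\le n\\ d\equiv n \bmod 2}} d\binom{n}{\frac{n-d}2}^2=\begin{cases} n\binom{n-1}{\frac{n-1}2}^2 & n\text{ odd},\\[4pt] n\binom{n-1}{\frac n2}^2 & n\text{ even}.\end{cases}$$ *)

From mathcomp Require Import all_boot.
(* D(n) = sum_{1<=d<=n, d = n mod 2} d * C(n, (n-d)/2)^2, in nat.
   Since d and n have the same parity and d <= n, (n-d)./2 is exact. *)
Definition D (n : nat) : nat :=
  \sum_(1 <= d < n.+1 | odd d == odd n) d * 'C(n, (n - d)./2) ^ 2.

From mathcomp Require Import all_boot.
From mathcomp Require Import zify.

(* Substituting d = n - 2k (and adding the vanishing term d = 0 when n is even)
   turns D(n) into the sum of (n - 2k) C(n,k)^2 over 0 <= k <= n/2.  Since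
   n C(n-1,k) = (n-k) C(n,k) and n C(n-1,k-1) = k C(n,k), each summand equals
   n C(n-1,k)^2 - n C(n-1,k-1)^2, so the sum telescopes to n C(n-1,n/2)^2;
   for odd n, n/2 = (n-1)/2. *)

Lemma sqrnB_diff n j : j.*2 <= n -> (n - j) ^ 2 = j ^ 2 + n * (n - j.*2).
Proof. by move=> le_2j_n; nia. Qed.

Lemma bin_pred_sq_recr n k : 0 < n -> k.+1.*2 <= n ->
  n * 'C(n.-1, k.+1) ^ 2 = n * 'C(n.-1, k) ^ 2 + (n - k.+1.*2) * 'C(n, k.+1) ^ 2.
Proof.
move=> n_gt0 le_2k_n; apply/eqP; rewrite -(eqn_pmul2l n_gt0); apply/eqP.
have mulnn_sq m : n * (n * 'C(n.-1, m) ^ 2) = (n * 'C(n.-1, m)) ^ 2.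
  by rewrite expnMn mulnA mulnn.
rewrite mulnDr !mulnn_sq mul_bin_down mul_bin_diag !expnMn.
by rewrite sqrnB_diff // mulnDl mulnA.
Qed.

Lemma sum_subn_double_bin_sq n m : 0 < n -> m.*2 <= n ->
  \sum_(k < m.+1) (n - k.*2) * 'C(n, k) ^ 2 = n * 'C(n.-1, m) ^ 2.
Proof.
move=> n_gt0; elim: m => [|m IHm] le_2m_n; first by rewrite big_ord1 !bin0 subn0.
by rewrite big_ord_recr /= IHm ?bin_pred_sq_recr //; lia.
Qed.

Lemma big_nat_even (R : Type) (idx : R) (op : Monoid.law idx) N (F : nat -> R) :
  \big[op/idx]_(0 <= j < N | ~~ odd j) F j = \big[op/idx]_(k < uphalf N) F k.*2.
Proof.
elim: N => [|N IHN]; first by rewrite big_geq // big_ord0.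
rewrite big_mkcond big_nat_recr //= -big_mkcond IHN uphalf_half.
case: (boolP (odd N)) => [_ | even_N] /=; first by rewrite Monoid.mulm1.
by rewrite add0n big_ord_recr /= even_halfK.
Qed.

Lemma D_sum_subn_double n : D n = \sum_(k < n./2.+1) (n - k.*2) * 'C(n, k) ^ 2.
Proof.
transitivity (\sum_(0 <= j < n.+1 | ~~ odd j) (n - j) * 'C(n, j./2) ^ 2); last first.
  by rewrite big_nat_even; apply: eq_bigr => k _; rewrite doubleK.
have add_zero_term (P : pred nat) (F : nat -> nat) : F 0 = 0 ->
    \sum_(1 <= d < n.+1 | P d) F d = \sum_(0 <= d < n.+1 | P d) F d.
  by move=> F0; rewrite [RHS]big_ltn_cond // F0; case: ifP.
rewrite /D add_zero_term ?mul0n // big_nat_rev /=.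
apply: congr_big_nat => // j /andP[_ lt_j_n1] /=.
  by rewrite subSS oddB //; case: (odd n); case: (odd j).
by rewrite subSS subKn.
Qed.

Theorem mainTheorem9 (n : nat) : 1 <= n ->
  D n = (if odd n then n * 'C(n.-1, (n.-1)./2) ^ 2 else n * 'C(n.-1, n./2) ^ 2).
Proof.
move=> n_gt0; rewrite D_sum_subn_double sum_subn_double_bin_sq //; last first.
  by rewrite -[leqRHS]odd_double_half leq_addl.
case: ifP => // odd_n.
suff -> : n.-1./2 = n./2 by [].
by rewrite -{1}[n]odd_double_half odd_n add1n /= doubleK.
Qed.
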